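(* Let $X$ be a compact Hausdorff space, $\mathcal F$ a left ultrafunctor from $X$ to $\mathsf{k\text{-}CompMet}$, and $E=\coprod_{x\in X}\mathcal F(x)$ with the topology $\tau$. A subset $C\subseteq E$, written $C=\coprod_{x\in X}U(x)$ with $U(x)=C\cap\mathcal F(x)$, is $\tau$-open if and only if: for every ultrafilter $\mu$ on $X$ converging to a point $x\in\pi(C)$ and every $g\in U(x)$, if $(b_y)_{y\in X}$ is a representative of $\sigma_\mu(g)\in\int_X\mathcal F(y)\,d\mu$, then there exist $W\in\mu$ and $\epsilon>0$ such that $B(b_y,\epsilon)\subseteq U(y)$ for all $y\in W$ (i.e. $\coprod_{y\in W}B(b_y,\epsilon)\subseteq C$). (The existence of such $W,\epsilon$ does not depend on the representative.)
   Context: Ultrafilter conventions: pushforward $g\mu=\{B:g^{-1}(B)\in\mu\}$; for compact Hausdorff $X$, $\int_Sx_sd\mu$ is the limit of the pushforward of $\mu$ along $s\mapsto x_s$; $\int_S\nu_sd\mu$ is the ultrafilter with $B\in\int_S\nu_sd\mu$ iff $\{s:B\in\nu_s\}\in\mu$. $\mathsf{k\text{-}CompMet}$: complete metric spaces with distances $\le k$, 1-Lipschitz maps; metric ultraproduct $\int_SM_sd\mu=\prod M_s/\{\lim_\mu d(a_s,b_s)=0\}$ with metric $\lim_\mu d(a_s,b_s)$. A left ultrafunctor $\mathcal F$ from $X$ to $\mathsf{k\text{-}CompMet}$ assigns objects $\mathcal F(x)$ and 1-Lipschitz maps $\sigma_\mu:\mathcal F(\int_Sx_sd\mu)\to\int_S\mathcal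 F(x_s)d\mu$ for all sets $S$, families $(x_s)$ in $X$ and ultrafilters $\mu$ on $S$, compatible with principal ultrafilters and with the Fubini maps $\Delta((b_t)_t)=((b_t)_t)_s$ (i.e. $\Delta\circ\sigma_{\int_S\nu_sd\mu}=(\int_S\sigma_{\nu_s}d\mu)\circ\sigma_\mu$). For an ultrafilter $\mu$ on $X$, $\sigma_\mu$ refers to the identity family on $X$. $\tau$ is the unique topology on $E$ in which an ultrafilter $\eta$ on $E$ converges to $f$ iff $\pi\eta$ converges to $\pi(f)$ and, for a representative $(b_x)$ of $\sigma_{\pi\eta}(f)$, $\coprod_xB(b_x,\epsilon)\in\eta$ for all $\epsilon>0$. $B(b,\epsilon)$ is the open metric ball in the fibre containing $b$. *)

From HB Require Import structures.
From mathcomp Require Import all_boot all_order all_algebra.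
From mathcomp Require Import all_classical all_reals topology normedtype.
Set Implicit Arguments. Unset Strict Implicit. Unset Printing Implicit Defensive.
Import Order.TTheory GRing.Theory Num.Theory.
Local Open Scope classical_set_scope.
Local Open Scope ring_scope.

Definition is_ultrafilter (S : Type) (U : set_system S) : Prop :=
  [/\ U setT, ~ U set0,
      (forall A B, U A -> U B -> U (A `&` B)),
      (forall A B : set S, A `<=` B -> U A -> U B) &
      (forall A : set S, U A \/ U (~` A))].

Definition upush (S T : Type) (g : S -> T) (mu : set_system S) : set_system T :=
  [set B | mu (g @^-1` B)].

Definition principal (S : Type) (s0 : S) : set_system S := [set A | A s0].

Definition uintegral (S T : Type) (nu : S -> set_system T) (mu : set_system S)
  : set_system T := [set B | mu [set s | nu s B]].

Definition uconv (X : topologicalType) (mu : set_system X) (x : X) : Prop :=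
  mu --> x.

Definition is_ulimR (R : realType) (S : Type) (mu : set_system S) (f : S -> R) (r : R)
  : Prop := forall e : R, 0 < e -> mu [set s | `|f s - r| < e].
Definition ulimR (R : realType) (S : Type) (mu : set_system S) (f : S -> R) : R :=
  xget 0 (is_ulimR mu f).

Record kCompMet (R : realType) (k : R) := KCompMet {
  cm_car :> Type;
  cm_d : cm_car -> cm_car -> R;
  cm_d_ge0 : forall a b, 0 <= cm_d a b;
  cm_d_lek : forall a b, cm_d a b <= k;
  cm_d_eq0 : forall a b, cm_d a b = 0 <-> a = b;
  cm_d_sym : forall a b, cm_d a b = cm_d b a;
  cm_d_tri : forall a b c, cm_d a c <= cm_d a b + cm_d b c;
  cm_complete : forall u : nat -> cm_car,
    (forall e : R, 0 < e -> exists N : nat, forall m n : nat,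
        (N <= m)%N -> (N <= n)%N -> cm_d (u m) (u n) < e) ->
    exists l : cm_car, forall e : R, 0 < e -> exists N : nat,
        forall n : nat, (N <= n)%N -> cm_d (u n) l < e
}.
Arguments cm_d {R k} _ _ _.

Section Ultrafunctor.
Variables (R : realType) (k : R) (X : topologicalType) (F : X -> kCompMet k).

(* Elements of the metric ultraproduct int_S F(x_s) dmu are represented by
   families a : forall s, F (xs s); two families represent the same element
   iff lim_mu d(a_s, b_s) = 0.  [urep mu a b] : b is a representative of the
   class of a. *)
Definition urep (S : Type) (xs : S -> X) (mu : set_system S)
  (a b : forall s, F (xs s)) : Prop :=
  ulimR mu (fun s => cm_d (F (xs s)) (a s) (b s)) = 0.
Arguments urep : clear implicits.
Arguments urep {S} xs mu a b.

(* Data of the structure maps: [sigma S xs mu x g] is a representative of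
   sigma_mu(g), for g in F(x), where x is meant to be int_S x_s dmu (the
   constraints below only concern that case). *)
Definition sigma_data : Type :=
  forall (S : Type) (xs : S -> X) (mu : set_system S) (x : X),
    F x -> forall s, F (xs s).

Definition is_left_ultrafunctor (sigma : sigma_data) : Prop :=
  (forall (S : Type) (xs : S -> X) (mu : set_system S) (x : X),
      is_ultrafilter mu -> uconv (upush xs mu) x ->
      forall g h : F x,
        ulimR mu (fun s => cm_d (F (xs s)) (sigma S xs mu x g s) (sigma S xs mu x h s))
          <= cm_d (F x) g h)
  /\
  (* compatibility with principal ultrafilters:
     sigma_{delta_s0} is the canonical identification F(x_s0) = int F(x_s) d delta_s0 *)
  (forall (S : Type) (xs : S -> X) (s0 : S) (g : F (xs s0)),
      sigma S xs (principal s0) (xs s0) g s0 = g)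
  /\
  (* compatibility with the Fubini maps:
     Delta o sigma_{int nu_s dmu} = (int_S sigma_{nu_s} dmu) o sigma_mu *)
  (forall (S T : Type) (mu : set_system S) (nu : S -> set_system T)
          (xs : T -> X) (ys : S -> X) (x : X),
      is_ultrafilter mu -> (forall s, is_ultrafilter (nu s)) ->
      (forall s, uconv (upush xs (nu s)) (ys s)) ->
      uconv (upush ys mu) x ->
      forall g : F x,
        ulimR mu (fun s => ulimR (nu s) (fun t =>
          cm_d (F (xs t))
            (sigma T xs (uintegral nu mu) x g t)
            (sigma T xs (nu s) (ys s) (sigma S ys mu x g s) t))) = 0).

Definition Etot : Type := {x : X & F x}.

Definition coprod_balls (W : set X) (b : forall y, F y) (e : R) : set Etot :=
  [set f | W (projT1 f) /\ cm_d (F (projT1 f)) (b (projT1 f)) (projT2 f) < e].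

Definition tau_conv (sigma : sigma_data) (eta : set_system Etot) (f : Etot) : Prop :=
  uconv (upush (@projT1 X (fun x => F x)) eta) (projT1 f) /\
  forall b : forall y, F y,
    urep (fun y => y) (upush (@projT1 X (fun x => F x)) eta)
      (sigma X (fun y => y) (upush (@projT1 X (fun x => F x)) eta) (projT1 f) (projT2 f)) b ->
    forall e : R, 0 < e -> eta (coprod_balls setT b e).

(* open sets of tau: the topology whose ultrafilter convergence is tau_conv
   (a set is open iff it belongs to every ultrafilter converging to one of
   its points) *)
Definition tau_open (sigma : sigma_data) (C : set Etot) : Prop :=
  forall (eta : set_system Etot) (f : Etot),
    is_ultrafilter eta -> C f -> tau_conv sigma eta f -> eta C.

End Ultrafunctor.
Arguments urep {R k X F S} xs mu a b.

From HB Require Import structures.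
From mathcomp Require Import all_boot all_order all_algebra.
From mathcomp Require Import all_classical all_reals topology normedtype.
From mathcomp Require Import lra.
Import Order.TTheory GRing.Theory Num.Theory.
Local Open Scope classical_set_scope.
Local Open Scope ring_scope.
Set Implicit Arguments. Unset Strict Implicit.
Import numFieldNormedType.Exports.

(* If C is open and b represents sigma_mu(g), all balls around b over a set of
   mu are pinned inside C: otherwise the sets coprod_{y in W} B(b_y, e) minus C
   generate a proper filter, and an ultrafilter eta refining it lies over mu,
   converges to (x, g) in tau (balls around b and around any other
   representative of sigma_mu(g) are eventually nested), yet avoids C.
   Conversely, if eta converges to (x, g) in tau then eta contains the balls
   around the representative sigma_mu(g) itself and the preimage of every set
   of mu, hence the coproduct of balls pinned inside C. *)

Lemma ultrafilterP (S : Type) (mu : set_system S) : is_ultrafilter mu <-> UltraFilter mu.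
Proof.
split=> [[muT mu0 muI muS muC] | mu_uf].
  have mu_proper : ProperFilter mu by split=> //; split=> //; exact: muI.
  split=> // G G_proper mu_sub; rewrite eqEsubset; split=> // A GA.
  have [//|/mu_sub GnA] := muC A.
  exfalso; apply: (@filter_not_empty _ G); rewrite -(setICr A); exact: filterI.
split; [exact: filterT | exact: filter_not_empty | exact: filterI
       | exact: filterS | move=> A; exact: in_ultra_setVsetC].
Qed.

Lemma is_ultrafilter_upush (S T : Type) (f : S -> T) (mu : set_system S) :
  is_ultrafilter mu -> is_ultrafilter (upush f mu).
Proof.
case=> muT mu0 muI muS muC; split; rewrite /upush /=.
- by rewrite preimage_setT.
- by rewrite preimage_set0.
- by move=> A B; rewrite preimage_setI; exact: muI.
- by move=> A B AB; apply: muS; exact: preimage_subset.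
- by move=> A; rewrite preimage_setC; exact: muC.
Qed.

Section UltrafilterLimits.
Variables (S : Type) (R : realType).
Implicit Types (mu : set_system S) (f : S -> R).

Lemma is_ulimR_exists (k : R) mu f :
  is_ultrafilter mu -> (forall s, 0 <= f s <= k) -> exists r, is_ulimR mu f r.
Proof.
move=> mu_uf f_bounded.
have /ultrafilterP f_mu_uf := is_ultrafilter_upush f mu_uf.
have := @segment_compact R 0 k; rewrite compact_ultra => /(_ _ f_mu_uf).
case=> [|r [_ f_mu_r]].
  case: mu_uf => muT _ _ muS _; apply: muS muT => s _ /=.
  by rewrite in_itv /= f_bounded.
exists r => e e_gt0.
have /f_mu_r : nbhs r (ball r e) by apply/nbhs_ballP; exists e.
case: mu_uf => _ _ _ muS _; apply: muS => s /=.
by rewrite -ball_normE /= distrC.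
Qed.

Lemma ulimR_eq mu f r : is_ultrafilter mu -> is_ulimR mu f r -> ulimR mu f = r.
Proof.
move=> [_ mu0 muI muS _] f_r.
have : is_ulimR mu f (ulimR mu f) by apply: xgetPex; exists r.
set r' := ulimR mu f => f_r'; apply: contrapT => /eqP neq_r'r.
have e_gt0 : 0 < `|r' - r| / 2 by rewrite divr_gt0 // normr_gt0 subr_eq0.
apply/mu0/(muS _ _ _ (muI _ _ (f_r' _ e_gt0) (f_r _ e_gt0))).
move=> s [/= near_r' near_r].
have : `|r' - r| <= `|r' - f s| + `|f s - r| by rewrite -(subrKA (f s)) ler_normD.
by rewrite distrC in near_r'; lra.
Qed.

Lemma ulimR_eq0_lt (k : R) mu f :
  is_ultrafilter mu -> (forall s, 0 <= f s <= k) -> ulimR mu f = 0 ->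
  forall e, 0 < e -> mu [set s | f s < e].
Proof.
move=> mu_uf f_bounded f_lim0 e e_gt0.
have [r f_r] := is_ulimR_exists mu_uf f_bounded.
move: (f_r) => /(ulimR_eq mu_uf); rewrite f_lim0 => r0; subst r.
case: mu_uf => _ _ _ muS _; apply: muS (f_r e e_gt0) => s /=.
by rewrite subr0 ger0_norm //; case/andP: (f_bounded s).
Qed.

End UltrafilterLimits.

Section CoproductTopology.
Variables (R : realType) (k : R) (X : topologicalType) (F : X -> kCompMet k).
Local Notation proj := (@projT1 X (fun x => F x)).

Lemma urep_refl (S : Type) (xs : S -> X) (mu : set_system S) (a : forall s, F (xs s)) :
  is_ultrafilter mu -> urep xs mu a a.
Proof.
move=> mu_uf; apply: ulimR_eq => // e e_gt0.
case: mu_uf => muT _ _ muS _; apply: muS muT => s _ /=.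
by rewrite (proj2 (cm_d_eq0 _ _) erefl) subrr normr0.
Qed.

Lemma urep_lt (S : Type) (xs : S -> X) (mu : set_system S) (a b : forall s, F (xs s)) :
  is_ultrafilter mu -> urep xs mu a b ->
  forall e, 0 < e -> mu [set s | cm_d (F (xs s)) (a s) (b s) < e].
Proof.
move=> mu_uf; apply: (ulimR_eq0_lt (k := k)) => // s.
by rewrite cm_d_ge0 cm_d_lek.
Qed.

Lemma coprod_balls_sub (W : set X) (b b' : forall y, F y) (d e : R) :
  (forall y, W y -> cm_d (F y) (b' y) (b y) < d) ->
  coprod_balls W b e `<=` coprod_balls setT b' (d + e).
Proof.
move=> near_b [y c] [/= Wy bc]; split=> //=.
have := cm_d_tri (b' y) (b y) c; have := near_b y Wy; lra.
Qed.

Lemma tau_conv_of_balls (sigma : sigma_data F) (eta : set_system (Etot F))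
    (mu : set_system X) (x : X) (g : F x) (b : forall y, F y) :
  is_ultrafilter eta -> upush proj eta = mu -> uconv mu x ->
  urep (fun y => y) mu (sigma X (fun y => y) mu x g) b ->
  (forall W e, mu W -> 0 < e -> eta (coprod_balls W b e)) ->
  tau_conv sigma eta (existT _ x g).
Proof.
move=> eta_uf push_eta mu_x sigma_b eta_balls.
rewrite /tau_conv push_eta; split=> // b' sigma_b' e e_gt0.
have mu_uf : is_ultrafilter mu by rewrite -push_eta; exact: is_ultrafilter_upush.
have e2_gt0 : 0 < e / 2 by rewrite divr_gt0.
have e4_gt0 : 0 < e / 4 by rewrite divr_gt0.
pose D := [set y | cm_d (F y) (b' y) (b y) < e / 2].
have muD : mu D.
  case: (mu_uf) => _ _ muI muS _.
  apply: muS (muI _ _ (urep_lt mu_uf sigma_b e4_gt0) (urep_lt mu_uf sigma_b' e4_gt0)).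
  move=> y [/= near_b near_b']; rewrite /D /=.
  have := cm_d_tri (b' y) (sigma X (fun y => y) mu x g y) (b y).
  have := cm_d_sym (b' y) (sigma X (fun y => y) mu x g y); lra.
case: eta_uf => _ _ _ etaS _; apply: etaS (eta_balls D _ muD e2_gt0).
by rewrite [X in _ `<=` coprod_balls _ _ X](splitr e); exact: coprod_balls_sub.
Qed.

Lemma exists_ultrafilter_balls (mu : set_system X) (b : forall y, F y)
    (A : set (Etot F)) :
  is_ultrafilter mu ->
  (forall W e, mu W -> 0 < e -> coprod_balls W b e `&` A !=set0) ->
  exists eta : set_system (Etot F), [/\ is_ultrafilter eta, eta A,
    upush proj eta = mu & forall W e, mu W -> 0 < e -> eta (coprod_balls W b e)].
Proof.
move=> mu_uf balls_meet_A; have [muT _ muI _ _] := mu_uf.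
pose base := [set P | exists W e, [/\ mu W, 0 < e & coprod_balls W b e `&` A `<=` P]].
have base_proper : ProperFilter base.
  split.
    move=> [W [e [muW e_gt0 sub0]]].
    by have [f /sub0] := balls_meet_A W e muW e_gt0.
  split.
  - by exists setT, 1.
  - move=> P Q [W1 [e1 [muW1 e1_gt0 sub1]]] [W2 [e2 [muW2 e2_gt0 sub2]]].
    exists (W1 `&` W2), (Num.min e1 e2); split; [exact: muI | by rewrite lt_min e1_gt0 |].
    move=> f [[[W1f W2f]]]; rewrite lt_min => /andP[d1 d2] Af.
    by split; [apply: sub1 | apply: sub2].
  - move=> P Q PQ [W [e [muW e_gt0 sub]]]; exists W, e; split=> //.
    exact: subset_trans PQ.
have [eta [eta_uf base_eta]] := ultraFilterLemma base_proper.
have balls_eta W e : mu W -> 0 < e -> eta (coprod_balls W b e).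
  by move=> muW e_gt0; apply: base_eta; exists W, e; split=> // f [].
exists eta; split; [exact/ultrafilterP | | | exact: balls_eta].
  by apply: base_eta; exists setT, 1; split=> // f [].
have /ultrafilterP mu_ultra := mu_uf.
have /ultrafilterP push_uf := is_ultrafilter_upush proj (iffRL (ultrafilterP eta) eta_uf).
apply: (max_filter (ultra_proper (UltraFilter := push_uf))) => W muW.
by rewrite /upush /=; apply: filterS (balls_eta W 1 muW ltr01) => f [].
Qed.

Definition balls_pinned (sigma : sigma_data F) (C : set (Etot F)) : Prop :=
  forall (mu : set_system X) (x : X),
    is_ultrafilter mu -> uconv mu x ->
    forall g : F x, C (existT _ x g) ->
    forall b : forall y, F y,
      urep (fun y => y) mu (sigma X (fun y => y) mu x g) b ->
      exists W : set X, mu W /\ exists e : R, 0 < e /\ coprod_balls W b e `<=` C.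

Lemma tau_open_balls_pinned (sigma : sigma_data F) (C : set (Etot F)) :
  tau_open sigma C -> balls_pinned sigma C.
Proof.
move=> C_open mu x mu_uf mu_x g Cg b sigma_b; apply: contrapT => not_pinned.
have balls_meet_CC W e : mu W -> 0 < e -> coprod_balls W b e `&` ~` C !=set0.
  move=> muW e_gt0; apply: contrapT => no_meet.
  apply: not_pinned; exists W; split=> //; exists e; split=> // f balls_f.
  by apply: contrapT => CCf; apply: no_meet; exists f.
have [eta [eta_uf eta_CC push_eta eta_balls]] :=
  exists_ultrafilter_balls mu_uf balls_meet_CC.
have eta_x : tau_conv sigma eta (existT _ x g) by exact: tau_conv_of_balls sigma_b _.
have [_ eta0 etaI _ _] := eta_uf; apply: eta0.
by rewrite -(setICr C); apply: etaI eta_CC; exact: C_open eta_x.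
Qed.

Lemma balls_pinned_tau_open (sigma : sigma_data F) (C : set (Etot F)) :
  balls_pinned sigma C -> tau_open sigma C.
Proof.
move=> pinned eta [x g] eta_uf Cg [/= mu_x eta_balls].
set mu := upush proj eta in mu_x eta_balls.
have mu_uf : is_ultrafilter mu by exact: is_ultrafilter_upush.
have sigma_rep := urep_refl (sigma X (fun y => y) mu x g) mu_uf.
have [W [muW [e [e_gt0 balls_C]]]] := pinned mu x mu_uf mu_x g Cg _ sigma_rep.
have [_ _ etaI etaS _] := eta_uf.
apply: etaS (etaI _ _ (eta_balls _ sigma_rep e e_gt0) muW) => f [[_ near_f] Wf].
exact: balls_C (conj Wf near_f).
Qed.

End CoproductTopology.

Theorem theorem3p2 (R : realType) (k : R) (X : topologicalType)
  (hcomp : compact [set: X]) (hhaus : hausdorff_space X)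
  (F : X -> kCompMet k) (sigma : sigma_data F)
  (hF : is_left_ultrafunctor sigma) (C : set (Etot F)) :
  tau_open sigma C <->
  (forall (mu : set_system X) (x : X),
     is_ultrafilter mu -> uconv mu x ->
     forall g : F x, C (existT _ x g) ->
     forall b : forall y, F y,
       urep (fun y => y) mu (sigma X (fun y => y) mu x g) b ->
       exists W : set X, mu W /\
         exists e : R, 0 < e /\
           coprod_balls W b e `<=` C).
Proof.
by split; [exact: tau_open_balls_pinned | exact: balls_pinned_tau_open].
Qed.
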